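(* Let $(E,\mathcal{E},m)$ be a $\sigma$-finite measure space and let $\{P(t)\}_{t\ge0}$ be a stochastic semigroup on $L^1(E,\mathcal{E},m)$ that is asymptotically stable with invariant density $f_*$. If a nonnegative measurable function $\tilde f_*$ is subinvariant for $\{P(t)\}_{t\ge0}$ and $m(\operatorname{supp} f_*\cap\{x:\tilde f_*(x)<\infty\})>0$, then $\tilde f_*\in L^1$.
   Context: $D(m)$ denotes the set of densities (nonnegative elements of $L^1$ of norm one). A stochastic semigroup is a $C_0$-semigroup of linear operators on $L^1$ each mapping $D(m)$ into $D(m)$. Each such operator (a positive contraction) is extended to nonnegative measurable functions by $Qf=\sup_n Qf_n$ whenever $f=\sup_n f_n$ with $0\le f_n\uparrow$, $f_n\in L^1_+$ (possibly $+\infty$). A nonnegative measurable $f$ is subinvariant (invariant) for the semigroup if $P(t)f\le f$ ($P(t)f=f$) for every $t\ge0$. The semigroup is asymptotically stable if it has an invariant density $f_*$ with $\lim_{t\to\infty}\|P(t)f-f_*\|=0$ for all $f\in D(m)$. $\operatorname{supp} f=\{x:f(x)\neq0\}$. *)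

From HB Require Import structures.
From mathcomp Require Import all_boot all_order all_algebra.
From mathcomp Require Import all_classical all_reals all_analysis.
From mathcomp Require Import measurable_realfun.
Set Implicit Arguments. Unset Strict Implicit. Unset Printing Implicit Defensive.
Import Order.TTheory GRing.Theory Num.Theory.
Import numFieldNormedType.Exports.
Local Open Scope classical_set_scope.
Local Open Scope ring_scope.

Section Defs.
Context (d : measure_display) (T : measurableType d) (R : realType)
  (mu : {measure set T -> \bar R}).

Definition L1 (f : T -> R) : Prop :=
  measurable_fun setT f /\ mu.-integrable setT (fun x => (f x)%:E).

Definition L1dist (f g : T -> R) : \bar R :=
  (\int[mu]_x (`| f x - g x |)%:E)%E.

Definition density (f : T -> R) : Prop :=
  L1 f /\ {ae mu, forall x, 0 <= f x} /\ (\int[mu]_x (f x)%:E = 1)%E.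

(* Stochastic semigroup {P(t)}_{t>=0} on L^1 (only t >= 0 is used);
   operators act on representatives and must respect a.e. equality. *)
Definition stochastic_semigroup (P : R -> (T -> R) -> (T -> R)) : Prop :=
  (forall t f g, 0 <= t -> L1 f -> L1 g -> {ae mu, forall x, f x = g x} ->
     {ae mu, forall x, P t f x = P t g x}) /\
  (forall t f, 0 <= t -> L1 f -> L1 (P t f)) /\
  (forall t (a b : R) f g, 0 <= t -> L1 f -> L1 g ->
     {ae mu, forall x, P t (fun y => a * f y + b * g y) x
                       = a * P t f x + b * P t g x}) /\
  (forall f, L1 f -> {ae mu, forall x, P 0 f x = f x}) /\
  (forall t s f, 0 <= t -> 0 <= s -> L1 f ->
     {ae mu, forall x, P (t + s) f x = P t (P s f) x}) /\
  (forall f, L1 f -> (L1dist (P t f) f @[t --> 0^'+] --> 0%E)) /\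
  (forall t f, 0 <= t -> density f -> density (P t f)).

Definition asymptotically_stable_with (P : R -> (T -> R) -> (T -> R))
    (fstar : T -> R) : Prop :=
  density fstar /\
  (forall t, 0 <= t -> {ae mu, forall x, P t fstar x = fstar x}) /\
  (forall f, density f -> (L1dist (P t f) fstar @[t --> +oo] --> 0%E)).

(* Q g <= h a.e. for the extension of Q to a nonnegative measurable g:
   Q g = sup_n Q g_n for any 0 <= g_n increasing to g, g_n in L^1_+. *)
Definition ext_le (Q : (T -> R) -> (T -> R)) (g h : T -> \bar R) : Prop :=
  forall gs : nat -> T -> R,
    (forall n, L1 (gs n)) -> (forall n x, 0 <= gs n x) ->
    (forall n x, gs n x <= gs n.+1 x) ->
    (forall x, g x = ereal_sup (range (fun n => (gs n x)%:E))) ->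
    {ae mu, forall x, (ereal_sup (range (fun n => (Q (gs n) x)%:E)) <= h x)%E}.

Definition subinvariant (P : R -> (T -> R) -> (T -> R)) (g : T -> \bar R)
    : Prop :=
  measurable_fun setT g /\ (forall x, (0 <= g x)%E) /\
  (forall t, 0 <= t -> ext_le (P t) g g).

End Defs.

From HB Require Import structures.
From mathcomp Require Import all_boot all_order all_algebra.
From mathcomp Require Import all_classical all_reals all_analysis.
From mathcomp Require Import measurable_realfun.
From mathcomp Require Import lra.

Set Implicit Arguments.
Unset Strict Implicit.
Unset Printing Implicit Defensive.
Import Order.TTheory GRing.Theory Num.Theory.
Local Open Scope classical_set_scope.
Local Open Scope ring_scope.

(* Suppose the integral of ftilde is infinite. By sigma-finiteness ftilde is the
   increasing limit of integrable g_n >= 0 whose integrals diverge, and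
   subinvariance gives P(t) g_n <= ftilde. The density h = g_n / c, c = ||g_n||,
   converges to fstar under P(t), yet on
   S_k = {fstar >= 1/(k+1)} `&` {ftilde <= k+1} it satisfies
   P(t) h <= (k+1)/c <= 1/(k+2) as soon as c >= (k+1)(k+2), so that
   m(S_k) <= c ||P(t) h - fstar|| for all t, and m(S_k) = 0. The S_k exhaust
   {fstar <> 0} `&` {ftilde < oo}, which has positive measure. *)

Section ereal_truncn.
Context {R : realType}.
Implicit Types (e : \bar R) (r : R).

Definition ereal_truncn e (n : nat) : R := fine (mine e n%:R%:E).

Lemma ereal_truncn_ge0 e n : (0 <= e)%E -> 0 <= ereal_truncn e n.
Proof.
rewrite /ereal_truncn; case: e => [r||] //= r0; rewrite ?lee_fin in r0.
by rewrite -EFin_min /= le_min r0 ler0n.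
Qed.

Lemma ereal_truncn_le e n : (0 <= e)%E -> ((ereal_truncn e n)%:E <= e)%E.
Proof.
rewrite /ereal_truncn; case: e => [r||] //= r0; last by rewrite leey.
by rewrite -EFin_min /= lee_fin ge_min lexx.
Qed.

Lemma ereal_truncn_le_nat e n : (0 <= e)%E -> ereal_truncn e n <= n%:R.
Proof.
rewrite /ereal_truncn; case: e => [r||] //= r0.
by rewrite -EFin_min /= ge_min lexx orbT.
Qed.

Lemma ereal_truncn_nondecreasing e :
  (0 <= e)%E -> {homo ereal_truncn e : m n / (m <= n)%N >-> m <= n}.
Proof.
rewrite /ereal_truncn; case: e => [r||] //= r0 m n mn; last by rewrite ler_nat.
by rewrite -!EFin_min /= le_min !ge_min lexx /= ler_nat mn !orbT.
Qed.

Lemma ereal_sup_eventually_truncn e (u : nat -> R) (n0 : nat) :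
  (0 <= e)%E -> (forall n, ((u n)%:E <= e)%E) ->
  (forall n, (n0 <= n)%N -> u n = ereal_truncn e n) ->
  ereal_sup (range (fun n => (u n)%:E)) = e.
Proof.
move=> e0 ule ueq; apply/eqP; rewrite eq_le; apply/andP; split.
  by apply: ge_ereal_sup => _ [n _ <-]; exact: ule.
have large r : exists2 n, (n0 <= n)%N & r < n%:R.
  exists (maxn n0 (Num.truncn r).+1); first exact: leq_maxl.
  by apply: lt_le_trans (truncnS_gt r) _; rewrite ler_nat leq_maxr.
case: e e0 ule ueq => [r||] // _ _ ueq.
  have [n n0n rn] := large r; apply: ereal_sup_ubound; exists n => //=.
  by rewrite ueq // /ereal_truncn -EFin_min /= min_l // ltW.
rewrite leye_eq; apply/eqP/eq_infty => r.
have [n n0n rn] := large r; apply: le_trans (ereal_sup_ubound _); last by exists n.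
by rewrite /= ueq // lee_fin ltW.
Qed.

End ereal_truncn.

Section L1_approximation.
Context d (T : measurableType d) (R : realType) (mu : {measure set T -> \bar R}).

Definition L1_approximation (gs : nat -> T -> R) (f : T -> \bar R) : Prop :=
  [/\ forall n, L1 mu (gs n), forall n x, 0 <= gs n x,
      forall x, {homo gs ^~ x : m n / (m <= n)%N >-> m <= n}
    & forall x, f x = ereal_sup (range (fun n => (gs n x)%:E))].

Lemma L1_indic_ereal_truncn (A : set T) (f : T -> \bar R) n :
  measurable A -> (mu A < +oo)%E -> measurable_fun setT f ->
  (forall x, 0 <= f x)%E -> L1 mu (fun x => \1_A x * ereal_truncn (f x) n).
Proof.
move=> mA muA mf f0.
have mg : measurable_fun setT (fun x => \1_A x * ereal_truncn (f x) n).
  apply: measurable_funM; first exact: measurable_indic.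
  apply: measurableT_comp; first exact: fine_measurable.
  exact: measurable_mine.
split => //; apply/integrableP; split; first exact/measurable_EFinP.
apply: (@le_lt_trans _ _ (\int[mu]_x (n%:R%:E * (\1_A x)%:E))%E).
  apply: ge0_le_integral => //.
  - exact/measurableT_comp/measurable_EFinP.
  - exact/measurable_funeM/measurable_EFinP/measurable_indic.
  - move=> x _; rewrite /= ger0_norm; last first.
      by rewrite mulr_ge0 ?ereal_truncn_ge0 ?indicE ?ler0n.
    rewrite -EFinM lee_fin [leRHS]mulrC.
    by apply: ler_wpM2l; rewrite ?indicE ?ler0n ?ereal_truncn_le_nat.
rewrite ge0_integralZl_EFin //; last exact/measurable_EFinP/measurable_indic.
by rewrite integral_indic // setIT lte_mul_pinfty.
Qed.

Lemma sigma_finite_L1_approximation (f : T -> \bar R) :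
  sigma_finite setT mu -> measurable_fun setT f -> (forall x, 0 <= f x)%E ->
  exists gs, L1_approximation gs f.
Proof.
move=> /sigma_finiteP [F [FU ndF Ffin]] mf f0.
have subF m n : (m <= n)%N -> F m `<=` F n by move=> mn; rewrite -subsetEset; exact: ndF.
exists (fun n x => \1_(F n) x * ereal_truncn (f x) n); split.
- by move=> n; have [mF muF] := Ffin n; exact: L1_indic_ereal_truncn.
- by move=> n x; rewrite mulr_ge0 ?ereal_truncn_ge0 ?indicE ?ler0n.
- move=> x m n mn; apply: ler_pM; rewrite ?indicE ?ler0n ?ereal_truncn_ge0 //.
    case: (boolP (x \in F m)) => // /set_mem xFm.
    by rewrite (mem_set (subF _ _ mn _ xFm)).
  exact: ereal_truncn_nondecreasing.
- move=> x; have [n0 _ Fx] : (\bigcup_i F i) x by rewrite -FU.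
  apply/esym; apply: (@ereal_sup_eventually_truncn _ _ _ n0 (f0 x)) => [n|n n0n].
    apply: (@le_trans _ _ (ereal_truncn (f x) n)%:E); last exact: ereal_truncn_le.
    by rewrite lee_fin ler_piMl ?ereal_truncn_ge0 // indicE; case: (_ \in _).
  by rewrite indicE (mem_set (subF _ _ n0n _ Fx)) mul1r.
Qed.

Lemma ext_le_L1_approximation (Q : (T -> R) -> T -> R) (f h : T -> \bar R)
    (gs : nat -> T -> R) :
  ext_le mu Q f h -> L1_approximation gs f ->
  forall n, {ae mu, forall x, ((Q (gs n) x)%:E <= h x)%E}.
Proof.
move=> Qfh [gsL1 gs0 gsnd gsf] n.
apply: filterS (Qfh gs gsL1 gs0 (fun n x => gsnd x n n.+1 (leqnSn n)) gsf).
by move=> x; apply: le_trans; apply: ereal_sup_ubound; exists n.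
Qed.

Lemma L1_approximation_integral_unbounded (gs : nat -> T -> R) (f : T -> \bar R) :
  L1_approximation gs f -> (\int[mu]_x f x = +oo)%E ->
  forall K : R, exists n, (K%:E <= \int[mu]_x (gs n x)%:E)%E.
Proof.
move=> [gsL1 gs0 gsnd gsf] foo K.
have mgs n : measurable_fun setT (fun x => (gs n x)%:E).
  exact/measurable_EFinP/(proj1 (gsL1 n)).
have gsndE x : {homo (fun n => (gs n x)%:E) : m n / (m <= n)%N >-> (m <= n)%E}.
  by move=> m n mn; rewrite lee_fin gsnd.
have limf x : limn (fun n => (gs n x)%:E) = f x.
  by rewrite gsf; apply: cvg_lim => //; exact: ereal_nondecreasing_cvgn.
have intnd : {homo (fun n => \int[mu]_x (gs n x)%:E)%E : m n / (m <= n)%N >-> (m <= n)%E}.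
  move=> m n mn; apply: ge0_le_integral => // x _; rewrite ?lee_fin //.
  exact: gsnd.
have : ereal_sup (range (fun n => \int[mu]_x (gs n x)%:E))%E = +oo%E.
  rewrite -foo; under eq_integral do rewrite -limf.
  rewrite (monotone_convergence mu measurableT mgs) => [|n x _|x _]; last 2 first.
  - by rewrite lee_fin.
  - exact: gsndE.
  by apply/esym/cvg_lim => //; exact: ereal_nondecreasing_cvgn.
move=> supoo; have : (K%:E < ereal_sup (range (fun n => \int[mu]_x (gs n x)%:E)))%E.
  by rewrite supoo ltry.
by move=> /ereal_sup_gt [_ [n _ <-]] /ltW; exists n.
Qed.

End L1_approximation.

Lemma ge1_scaled_dist (R : realFieldType) (m c f p : R) :
  0 < m -> m^-1 <= f -> c * p <= m -> m * (m + 1) <= c -> 1 <= c * `|p - f|.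
Proof.
move=> m0 mf cp mc.
have c0 : 0 <= c by apply: le_trans mc; rewrite mulr_ge0 // ?addr_ge0 // ltW.
have cf : m + 1 <= c * f.
  by apply: le_trans (ler_wpM2l c0 mf); rewrite ler_pdivlMr // mulrC.
have := ler_wpM2l c0 (ler_norm (f - p)); rewrite distrC mulrBr; lra.
Qed.

Lemma eq0_le_scaled_cvg0 (R : realType) (a : \bar R) (c : R) (u : R -> \bar R) :
  (0 <= a)%E -> (forall t, 0 <= t -> (a <= c%:E * u t)%E) ->
  u t @[t --> +oo] --> 0%E -> a = 0%E.
Proof.
move=> a0 au u0; apply/eqP; rewrite eq_le a0 andbT.
have cu0 : (c%:E * u t)%E @[t --> +oo] --> (c%:E * 0)%E by apply: cvgeZl.
rewrite mule0 in cu0; apply: (cvge_to_ge cu0).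
by near=> t; apply: au; near: t; exact: nbhs_pinfty_ge.
Unshelve. all: end_near.
Qed.

Section level_sets.
Context d (T : measurableType d) (R : realType).

Definition level_set (f : T -> R) (g : T -> \bar R) (k : nat) : set T :=
  [set x | k.+1%:R^-1 <= `|f x|] `&` [set x | (g x <= k.+1%:R%:E)%E].

Lemma measurable_level_set (f : T -> R) (g : T -> \bar R) k :
  measurable_fun setT f -> measurable_fun setT g -> measurable (level_set f g k).
Proof.
move=> mf mg; apply: measurableI; rewrite -[X in measurable X]setTI.
  rewrite (_ : [set x | _] = [set x | (k.+1%:R^-1%:E <= (`|f x|)%:E)%E]).
    by apply: measurable_lee => //; exact/measurable_EFinP/measurableT_comp.
  by apply/seteqP; split => x /=; rewrite lee_fin.
exact: measurable_lee.
Qed.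

Lemma measurable_neq0_setI_ltey (f : T -> R) (g : T -> \bar R) :
  measurable_fun setT f -> measurable_fun setT g ->
  measurable ([set x | f x != 0] `&` [set x | (g x < +oo)%E]).
Proof.
move=> mf mg; apply: measurableI; rewrite -[X in measurable X]setTI.
  rewrite (_ : [set x | _] = [set x | (0 < (`|f x|)%:E)%E]).
    by apply: measurable_lte => //; exact/measurable_EFinP/measurableT_comp.
  by apply/seteqP; split => x /=; rewrite lte_fin normr_gt0.
exact: measurable_lte.
Qed.

Lemma supp_finite_sub_level_sets (f : T -> R) (g : T -> \bar R) :
  [set x | f x != 0] `&` [set x | (g x < +oo)%E] `<=` \bigcup_k level_set f g k.
Proof.
move=> x [/= fx0 gxoo].
have [r gxr] : exists r, (g x <= r%:E)%E.
  by case: (g x) gxoo => [r _|//|_]; [exists r | exists 0; rewrite leNye].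
pose k := maxn (Num.truncn r) (Num.truncn `|f x|^-1).
exists k => //; split => /=.
  rewrite invf_ple ?posrE ?ltr0n ?normr_gt0 //; apply/ltW/(lt_le_trans (truncnS_gt _)).
  by rewrite ler_nat ltnS leq_maxr.
apply: (le_trans gxr); rewrite lee_fin; apply/ltW/(lt_le_trans (truncnS_gt _)).
by rewrite ler_nat ltnS leq_maxl.
Qed.

End level_sets.

Section subinvariant_level_sets.
Context d (T : measurableType d) (R : realType) (mu : {measure set T -> \bar R}).

Lemma density_normalize (g : T -> R) (c : R) :
  L1 mu g -> (forall x, 0 <= g x) -> (\int[mu]_x (g x)%:E = c%:E)%E -> 0 < c ->
  density mu (fun x => g x / c).
Proof.
move=> [mg ig] g0 gc c0.
have hE : (fun x => (g x / c)%:E) = (fun x => c^-1%:E * (g x)%:E)%E.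
  by apply/funext => x; rewrite -EFinM mulrC.
split; first by split; [exact: measurable_funM | rewrite hE; exact: integrableZl].
split; first by apply: aeW => x; rewrite divr_ge0 // ltW.
by rewrite hE integralZl // gc -EFinM mulVf // gt_eqF.
Qed.

Variables (P : R -> (T -> R) -> (T -> R)) (fstar : T -> R) (ftilde : T -> \bar R).
Hypotheses (SG : stochastic_semigroup mu P)
  (AS : asymptotically_stable_with mu P fstar)
  (mftilde : measurable_fun setT ftilde).

Lemma level_set_measure0 (g : T -> R) (k : nat) :
  L1 mu g -> (forall x, 0 <= g x) ->
  (forall t, 0 <= t -> {ae mu, forall x, ((P t g x)%:E <= ftilde x)%E}) ->
  ((k.+1 * k.+2)%:R%:E <= \int[mu]_x (g x)%:E)%E ->
  mu (level_set fstar ftilde k) = 0%E.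
Proof.
move=> gL1 g0 Pg_le gK.
have [[_ [PL1 [Plin _]]] [dstar [_ Pconv]]] := (SG, AS).
have [[mfstar _] [fstar0 _]] := dstar.
set S := level_set fstar ftilde k; set m : R := k.+1%:R.
have m0 : 0 < m by rewrite ltr0n.
have mS : measurable S by exact: measurable_level_set.
pose c := fine (\int[mu]_x (g x)%:E).
have gc : (\int[mu]_x (g x)%:E = c%:E)%E.
  by rewrite fineK // (integrable_fin_num measurableT gL1.2).
have mc : m * (m + 1) <= c.
  by rewrite -lee_fin -gc (le_trans _ gK) // lee_fin /m natrM natr1.
have c0 : 0 < c by apply: lt_le_trans mc; rewrite mulr_gt0 ?addr_gt0.
pose h x := g x / c.
have dh : density mu h by exact: density_normalize.
have Pgh t : 0 <= t -> {ae mu, forall x, P t g x = c * P t h x}.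
  move=> t0; have := Plin t c 0 h h t0 dh.1 dh.1.
  have -> : (fun y => c * h y + 0 * h y) = g.
    by apply/funext => y; rewrite mul0r addr0 mulrC divfK ?gt_eqF.
  by apply: filterS => x ->; rewrite mul0r addr0.
have S_le t : 0 <= t -> (mu S <= c%:E * L1dist mu (P t h) fstar)%E.
  move=> t0; have mPh := (PL1 t h t0 dh.1).1.
  rewrite -(setIT S) -(integral_indic _ measurableT) // /L1dist.
  rewrite -ge0_integralZl_EFin ?(ltW c0) //; last first.
    exact/measurable_EFinP/measurableT_comp/measurable_funB.
  apply: ae_ge0_le_integral => //.
  - exact/measurable_EFinP/measurable_indic.
  - by move=> x _; rewrite -EFinM lee_fin mulr_ge0 // ltW.
  - exact/measurable_funeM/measurable_EFinP/measurableT_comp/measurable_funB.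
  (* On S: fstar >= 1/m and c P(t)h = P(t)g <= ftilde <= m, with m(m+1) <= c. *)
  apply: filterS3 (Pg_le t t0) fstar0 (Pgh t t0) => x Pg_ft fx0 Pg_ch _.
  rewrite indicE -EFinM lee_fin; case: (boolP (x \in S)) => [/set_mem [/= fxm ftm]|_].
    apply: (ge1_scaled_dist m0 _ _ mc); first by rewrite -(ger0_norm fx0).
    by rewrite -lee_fin -Pg_ch (le_trans Pg_ft ftm).
  exact: mulr_ge0 (ltW c0) (normr_ge0 _).
apply: (eq0_le_scaled_cvg0 (measure_ge0 _ _) S_le); exact: Pconv.
Qed.

End subinvariant_level_sets.

Theorem corollary2p4 (d : measure_display) (T : measurableType d)
  (R : realType) (mu : {measure set T -> \bar R})
  (P : R -> (T -> R) -> (T -> R)) (fstar : T -> R) (ftilde : T -> \bar R) :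
  sigma_finite setT mu ->
  stochastic_semigroup mu P ->
  asymptotically_stable_with mu P fstar ->
  subinvariant mu P ftilde ->
  (0 < mu ([set x | (fstar x != 0)%R] `&` [set x | ftilde x < +oo]))%E ->
  mu.-integrable setT ftilde.
Proof.
move=> sfin SG AS [mft [ft0 Psub]] Spos.
have mfstar : measurable_fun setT fstar := AS.1.1.1.
have [gs approx] := sigma_finite_L1_approximation sfin mft ft0.
apply/integrableP; split => //.
rewrite (eq_integral ftilde) => [|x _]; last by rewrite gee0_abs.
rewrite ltey; apply/negP => /eqP ftoo.
have level_sets0 k : mu (level_set fstar ftilde k) = 0%E.
  have [gsL1 gs0 _ _] := approx.
  have [n gsK] := L1_approximation_integral_unbounded approx ftoo (k.+1 * k.+2)%:R.
  apply: (level_set_measure0 SG AS mft (gsL1 n) (gs0 n) _ gsK) => t t0.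
  exact: ext_le_L1_approximation (Psub t t0) approx n.
have levels0 : mu.-negligible (\bigcup_k level_set fstar ftilde k).
  apply: negligible_bigcup => k.
  by apply/negligibleP; [exact: measurable_level_set | exact: level_sets0].
move: Spos; rewrite (negligibleP _ (measurable_neq0_setI_ltey mfstar mft)).1 ?ltxx //.
exact: negligibleS (@supp_finite_sub_level_sets _ _ _ _ _) levels0.
Qed.
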